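(* For all $0\le p\le t\le 1$, $\pi(p,t)=\sup\{\mathbf P(S_\gamma\ge t)\mid \gamma \text{ a finite stake sequence}\}$.
   Context: Let $\beta_1,\beta_2,\ldots$ be independent Bernoulli random variables with success probability $p$. A stake sequence is a sequence $\gamma=(c_1,c_2,\ldots)$ of non-negative reals with $c_1\ge c_2\ge\cdots$ and $\sum_i c_i=1$; it is finite if $c_i=0$ for all but finitely many $i$. Write $S_\gamma=\sum_i c_i\beta_i$. For $0\le p\le t\le 1$ define $\pi(p,t)=\sup\{\mathbf P(S_\gamma\ge t)\mid \gamma \text{ a stake sequence}\}$. *)

From HB Require Import structures.
From mathcomp Require Import all_boot all_order all_algebra.
From mathcomp Require Import all_classical all_reals.
From mathcomp Require Import ereal topology normedtype sequences measure lebesgue_measure probability.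
Set Implicit Arguments. Unset Strict Implicit. Unset Printing Implicit Defensive.
Import Order.TTheory GRing.Theory Num.Theory.
Local Open Scope classical_set_scope.
Local Open Scope ring_scope.

Section Defs.
Context {d : measure_display} {T : measurableType d} {R : realType}.

Definition mutually_independent (P : probability T R) (beta : nat -> T -> R) :=
  forall (s : seq nat) (B : nat -> set R),
    uniq s -> (forall i, measurable (B i)) ->
    P (\bigcap_(i in [set i | i \in s]) (beta i @^-1` B i)) =
    \big[*%E/1%E]_(i <- s) P (beta i @^-1` B i).

Definition iid_bernoulli (P : probability T R) (p : R) (beta : nat -> T -> R) :=
  [/\ (forall i, measurable_fun setT (beta i)),
      (forall i x, beta i x = 0 \/ beta i x = 1),
      (forall i, P (beta i @^-1` [set 1]) = p%:E) &
      mutually_independent P beta].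

Definition stake_seq (c : nat -> R) :=
  [/\ (forall i, 0 <= c i),
      (forall i, c i.+1 <= c i) &
      (\sum_(i <oo) (c i)%:E = 1)%E].

Definition finite_stake_seq (c : nat -> R) :=
  stake_seq c /\ exists N, forall i, (N <= i)%N -> c i = 0.

Definition S_gamma (c : nat -> R) (beta : nat -> T -> R) (x : T) : \bar R :=
  (\sum_(i <oo) (c i * beta i x)%:E)%E.

Definition prob_ge (P : probability T R) (beta : nat -> T -> R) (c : nat -> R) (t : R) : \bar R :=
  P [set x | (t%:E <= S_gamma c beta x)%E].

(* pi(p,t) = sup over stake sequences (p is encoded in beta). *)
Definition pi_sup (P : probability T R) (beta : nat -> T -> R) (t : R) : \bar R :=
  ereal_sup [set prob_ge P beta c t | c in stake_seq].

Definition pi_fin_sup (P : probability T R) (beta : nat -> T -> R) (t : R) : \bar R :=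
  ereal_sup [set prob_ge P beta c t | c in finite_stake_seq].

End Defs.

(* Truncating a stake sequence c after n terms and renormalising by
   C_n = c_0 + ... + c_(n-1) can only lose the event t - (1 - C_n) <= V_n < t C_n,
   where V_n = c_0 beta_0 + ... + c_(n-1) beta_(n-1).  If some c_i vanishes, c is
   already finite; otherwise choose k, then n with 1 - C_n < c_k.  Two comparable
   outcomes of the lost event agree on their first k bits, since raising a bit i < k
   raises V_n by c_i >= c_k, more than the width of the window.  For 0 < p < 1 such
   prefix antichains have small probability: of the j + 1 nested strings 1^i 0^(j-i),
   each of probability at least q^j with q = min(p, 1 - p), at most one extends into
   the antichain, and iterating over m blocks of j bits gives the bound
   max(2/(j+1), (1 - q^j/2)^m). *)

From HB Require Import structures.
From mathcomp Require Import all_boot all_order all_algebra.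
From mathcomp Require Import all_classical all_reals.
From mathcomp Require Import ereal topology normedtype sequences measure lebesgue_measure probability.
From mathcomp Require Import measurable_realfun lebesgue_integral.
From mathcomp Require Import ring lra zify.
Import Order.TTheory GRing.Theory Num.Theory.

Set Implicit Arguments. Unset Strict Implicit. Unset Printing Implicit Defensive.
Local Open Scope classical_set_scope.
Local Open Scope ring_scope.

Section BernoulliExpectation.
Variables (R : realFieldType) (p : R).

Fixpoint Ebern (n : nat) (F : seq bool -> R) : R :=
  if n is n'.+1 then
    p * Ebern n' (fun s => F (true :: s)) + (1 - p) * Ebern n' (fun s => F (false :: s))
  else F [::].

Lemma eq_Ebern n F G : (forall s, size s = n -> F s = G s) -> Ebern n F = Ebern n G.
Proof.
elim: n F G => [|n IH] F G /= FG; first exact: FG.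
by congr (_ * _ + _ * _); apply: IH => s sn; apply: FG; rewrite /= sn.
Qed.

Lemma Ebern_lin n a b F G :
  Ebern n (fun s => a * F s + b * G s) = a * Ebern n F + b * Ebern n G.
Proof.
elim: n F G => [|n IH] F G //=.
rewrite (IH (fun s => F (true :: s))) (IH (fun s => F (false :: s))); ring.
Qed.

Lemma Ebern_cst n a : Ebern n (fun=> a) = a.
Proof. by elim: n => [|n IH] //=; rewrite IH; ring. Qed.

Lemma Ebern_cat j n F : Ebern (j + n) F = Ebern j (fun u => Ebern n (fun s => F (u ++ s))).
Proof.
elim: j F => [|j IH] F //=.
by rewrite (IH (fun s => F (true :: s))) (IH (fun s => F (false :: s))).
Qed.

Lemma Ebern_sum (I : Type) (r : seq I) n (F : I -> seq bool -> R) :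
  Ebern n (fun s => \sum_(i <- r) F i s) = \sum_(i <- r) Ebern n (F i).
Proof.
elim: n F => [|n IH] F //=.
rewrite (IH (fun i s => F i (true :: s))) (IH (fun i s => F i (false :: s))).
by rewrite !mulr_sumr -big_split.
Qed.

Definition Pbern n (A : pred (seq bool)) := Ebern n (fun s => (A s)%:R).

Hypotheses (p_ge0 : 0 <= p) (p_le1 : p <= 1).

Lemma ler_Ebern n F G : (forall s, size s = n -> F s <= G s) -> Ebern n F <= Ebern n G.
Proof.
elim: n F G => [|n IH] F G /= FG; first exact: FG.
have p'_ge0 : 0 <= 1 - p by rewrite subr_ge0.
by apply: lerD; apply: ler_wpM2l => //; apply: IH => s sn; apply: FG; rewrite /= sn.
Qed.

Lemma Ebern_ge0 n F : (forall s, size s = n -> 0 <= F s) -> 0 <= Ebern n F.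
Proof. by move=> F0; rewrite -(Ebern_cst n 0); apply: ler_Ebern. Qed.

Lemma Pbern_le1 n (A : pred (seq bool)) : Pbern n A <= 1.
Proof.
rewrite /Pbern -[leRHS](Ebern_cst n 1); apply: ler_Ebern => s _.
by case: (A s); rewrite ?ler01.
Qed.

End BernoulliExpectation.

Lemma Ebern0 (R : realFieldType) n (F : seq bool -> R) : Ebern 0 n F = F (nseq n false).
Proof. by elim: n F => [|n IH] F //=; rewrite !IH mul0r add0r subr0 mul1r. Qed.

Lemma Ebern1 (R : realFieldType) n (F : seq bool -> R) : Ebern 1 n F = F (nseq n true).
Proof. by elim: n F => [|n IH] F //=; rewrite !IH mul1r subrr mul0r addr0. Qed.

Definition chain (j i : nat) : seq bool := nseq i true ++ nseq (j - i) false.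

Lemma size_chain j i : (i <= j)%N -> size (chain j i) = j.
Proof. by move=> ij; rewrite size_cat !size_nseq subnKC. Qed.

Lemma nth_chain j i x : (i <= j)%N -> nth false (chain j i) x = (x < i)%N.
Proof.
move=> ij; rewrite nth_cat size_nseq; case: ltnP => xi; first by rewrite nth_nseq xi.
by rewrite nth_nseq; case: ifP.
Qed.

Lemma nth_chain_cat j i s x : (i <= j)%N ->
  nth false (chain j i ++ s) x = if (x < j)%N then (x < i)%N else nth false s (x - j).
Proof. by move=> ij; rewrite nth_cat size_chain //; case: ifP => // _; rewrite nth_chain. Qed.

Definition prefix_antichain (k : nat) (A : pred (seq bool)) := forall s s',
  (forall i, nth false s i ==> nth false s' i) -> A s -> A s' ->
  forall i, (i < k)%N -> nth false s i = nth false s' i.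

Lemma prefix_antichain_cat j k A u : size u = j ->
  prefix_antichain (j + k) A -> prefix_antichain k (fun s => A (u ++ s)).
Proof.
move=> uj hA s s' le_ss' As As' i ik.
have nth_shift v : nth false (u ++ v) (j + i) = nth false v i.
  by rewrite nth_cat uj ltnNge leq_addr /= addKn.
rewrite -!nth_shift; apply: hA => //; last by rewrite ltn_add2l.
by move=> x; rewrite !nth_cat; case: ifP => _ //; exact: implybb.
Qed.

Lemma prefix_antichain_chain_eq j k A s i l : prefix_antichain (j + k) A ->
  (i <= j)%N -> (l <= j)%N -> A (chain j i ++ s) -> A (chain j l ++ s) -> i = l.
Proof.
move=> hA; wlog il : i l / (i < l)%N.
  move=> wl ij lj Ai Al; case: (ltngtP i l) => [il|li|//]; first exact: wl.
  by apply/esym/wl.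
move=> ij lj Ai Al; have ij' : (i < j)%N := leq_trans il lj.
have le_il x : nth false (chain j i ++ s) x ==> nth false (chain j l ++ s) x.
  rewrite !nth_chain_cat //; case: ifP => _; last exact: implybb.
  by apply/implyP => /ltn_trans; apply.
have := hA _ _ le_il Ai Al i (leq_trans ij' (leq_addr k j)).
by rewrite !nth_chain_cat // ij' ltnn il.
Qed.

Lemma prefix_antichain_chain_sum (R : numDomainType) j k A s : prefix_antichain (j + k) A ->
  \sum_(i < j.+1) (A (chain j i ++ s))%:R <= 1 :> R.
Proof.
move=> hA; case: (pickP (fun i : 'I_j.+1 => A (chain j i ++ s))) => [i0 Ai0|noA]; last first.
  by rewrite big1 ?ler01 // => i _; rewrite noA.
rewrite (bigD1 i0) //= Ai0 big1 ?addr0 // => i ne_i_i0.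
case Ai: (A _) => //; case/eqP: ne_i_i0; apply: val_inj.
exact: prefix_antichain_chain_eq hA (ltn_ord i) (ltn_ord i0) Ai Ai0.
Qed.

Lemma contraction_step (R : realFieldType) (x M : R) (j : nat) : 0 <= x <= 1 -> 2 / j.+1%:R <= M ->
  M - x * (j.+1%:R * M - 1) <= (1 - x / 2) * M.
Proof.
move=> /andP[x0 x1] aM.
have jM : 2 <= j.+1%:R * M by move: aM; rewrite ler_pdivrMr ?ltr0n // mulrC.
have M0 : 0 <= M by apply: le_trans aM; rewrite divr_ge0 ?ler0n.
have M_jM : M <= j.+1%:R * M by rewrite ler_peMl // ler1n.
have : x * (M / 2) <= x * (j.+1%:R * M - 1) by apply: ler_wpM2l => //; lra.
lra.
Qed.

Section Anticoncentration.
Variables (R : realFieldType) (p q : R).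
Hypotheses (q_ge0 : 0 <= q) (q_le_p : q <= p) (q_le_1p : q <= 1 - p).

Let p_ge0 : 0 <= p. Proof. exact: le_trans q_ge0 q_le_p. Qed.
Let p_le1 : p <= 1. Proof. by rewrite -subr_ge0; exact: le_trans q_ge0 q_le_1p. Qed.

Lemma Ebern_ge_nseq_false j H : (forall s, size s = j -> 0 <= H s) ->
  q ^+ j * H (nseq j false) <= Ebern p j H.
Proof.
elim: j H => [|j IH] H H0 /=; first by rewrite mul1r.
have H0t s : size s = j -> 0 <= H (true :: s) by move=> sj; apply: H0; rewrite /= sj.
have H0f s : size s = j -> 0 <= H (false :: s) by move=> sj; apply: H0; rewrite /= sj.
rewrite exprS -mulrA -[leLHS]add0r; apply: lerD.
  by apply: mulr_ge0 => //; exact: Ebern_ge0.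
apply: ler_pM => //; last exact: IH.
by apply: mulr_ge0; [exact: exprn_ge0 | apply: H0f; rewrite size_nseq].
Qed.

Lemma Ebern_ge_chain j H : (forall s, size s = j -> 0 <= H s) ->
  q ^+ j * \sum_(i < j.+1) H (chain j i) <= Ebern p j H.
Proof.
elim: j H => [|j IH] H H0 /=.
  by rewrite mul1r big_ord_recl big_ord0 addr0.
have H0t s : size s = j -> 0 <= H (true :: s) by move=> sj; apply: H0; rewrite /= sj.
have H0f s : size s = j -> 0 <= H (false :: s) by move=> sj; apply: H0; rewrite /= sj.
rewrite big_ord_recl exprS -mulrA !mulrDr [leLHS]addrC.
have -> : chain j.+1 0 = false :: nseq j false by rewrite /chain subn0.
have -> : \sum_(i < j.+1) H (chain j.+1 (lift ord0 i)) = \sum_(i < j.+1) H (true :: chain j i).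
  by apply: eq_bigr => i _; rewrite /chain /= /bump /= add1n subSS.
apply: lerD; apply: ler_pM => //.
- apply: mulr_ge0; first exact: exprn_ge0.
  by apply: sumr_ge0 => i _; apply/H0t/size_chain; rewrite -ltnS.
- exact: IH.
- by apply: mulr_ge0; [exact: exprn_ge0 | apply: H0f; rewrite size_nseq].
- exact: Ebern_ge_nseq_false.
Qed.

Lemma Pbern_antichain_step k j M :
  (forall n A, (k <= n)%N -> prefix_antichain k A -> Pbern p n A <= M) ->
  forall n A, (j + k <= n)%N -> prefix_antichain (j + k) A ->
  Pbern p n A <= M - q ^+ j * (j.+1%:R * M - 1).
Proof.
move=> hM n A kn hA; rewrite /Pbern.
rewrite -(subnKC (leq_trans (leq_addr k j) kn)) Ebern_cat.
set G := fun u => Ebern p (n - j) (fun s => (A (u ++ s))%:R).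
have G_le u : size u = j -> G u <= M.
  by move=> uj; apply: hM; [lia | exact: prefix_antichain_cat uj hA].
have sum_G : \sum_(i < j.+1) G (chain j i) <= 1.
  rewrite /G -Ebern_sum -[leRHS](Ebern_cst p (n - j) 1); apply: ler_Ebern => // s _.
  exact: prefix_antichain_chain_sum hA.
have EMG : Ebern p j (fun u => M - G u) = M - Ebern p j G.
  have := Ebern_lin p j 1 (-1) (fun=> M) G; rewrite Ebern_cst mul1r mulN1r => <-.
  by apply: eq_Ebern => u _; ring.
have chain_bound : q ^+ j * \sum_(i < j.+1) (M - G (chain j i)) <= M - Ebern p j G.
  rewrite -EMG; apply: Ebern_ge_chain => u uj.
  by rewrite subr_ge0; exact: G_le.
move: chain_bound; rewrite sumrB sumr_const card_ord -mulr_natl.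
have := ler_wpM2l (exprn_ge0 j q_ge0) sum_G.
rewrite !mulrBr; lra.
Qed.

Lemma Pbern_antichain_iter j m n A : (m * j <= n)%N -> prefix_antichain (m * j) A ->
  Pbern p n A <= Num.max (2 / j.+1%:R) ((1 - q ^+ j / 2) ^+ m).
Proof.
have x01 : 0 <= q ^+ j <= 1 by rewrite exprn_ge0 // exprn_ile1 // (le_trans q_le_p).
elim: m n A => [|m IH] n A mn hA; first by rewrite le_max Pbern_le1 ?orbT.
rewrite mulSn in mn hA; apply: le_trans (Pbern_antichain_step IH mn hA) _.
set a := 2 / j.+1%:R; set r := 1 - q ^+ j / 2.
have r01 : 0 <= r <= 1 by apply/andP; split; rewrite /r; case/andP: x01 => ? ?; lra.
have a_le_max : a <= Num.max a (r ^+ m) by rewrite le_max lexx.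
apply: le_trans (contraction_step x01 a_le_max) _.
case/andP: r01 => r0 r1; rewrite le_max; case: (leP a (r ^+ m)) => _.
  by rewrite exprS lexx orbT.
by rewrite ler_piMl ?lexx // divr_ge0 ?ler0n.
Qed.

End Anticoncentration.

Lemma Pbern_antichain_small (R : realType) (p e : R) : 0 < p < 1 -> 0 < e ->
  exists k, forall n A, (k <= n)%N -> prefix_antichain k A -> Pbern p n A <= e.
Proof.
move=> /andP[p0 p1] e0; set q := Num.min p (1 - p).
have q0 : 0 < q by rewrite lt_min p0 subr_gt0.
have q_le_p : q <= p by rewrite ge_min lexx.
have q_le_1p : q <= 1 - p by rewrite ge_min lexx orbT.
pose j := Num.truncn (2 / e).
have aj : 2 / j.+1%:R <= e.
  have := truncnS_gt (2 / e); rewrite -/j ltr_pdivrMr // => ej.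
  by rewrite ler_pdivrMr ?ltr0n // mulrC ltW.
have qj0 : 0 < q ^+ j by exact: exprn_gt0.
have qj1 : q ^+ j <= 1 by apply: exprn_ile1; [exact: ltW | lra].
have r_lt1 : `|1 - q ^+ j / 2| < 1 by rewrite ger0_norm; lra.
have [N _ rN] := @cvgr0_norm_lt R R^o _ _ _ _ (cvg_expr r_lt1) e e0.
exists (N * j)%N => n A Nn hA.
apply: le_trans (Pbern_antichain_iter (ltW q0) q_le_p q_le_1p Nn hA) _.
rewrite ge_max aj /=; apply: ltW.
by have := rN N (leqnn N); rewrite /= ger0_norm ?exprn_ge0; lra.
Qed.

Section StakeSequence.
Variables (R : realType) (c : nat -> R).
Hypothesis hc : stake_seq c.

Lemma stake_ge0 i : 0 <= c i.
Proof. by case: hc. Qed.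

Lemma stake_le i j : (i <= j)%N -> c j <= c i.
Proof. by case: hc => _ c_noninc _; exact: Order.NatMonotonyTheory.nonincnP. Qed.

Lemma stake_partial_mono m n : (m <= n)%N -> \sum_(i < m) c i <= \sum_(i < n) c i.
Proof.
move=> mn; rewrite -!(big_mkord xpredT) (@big_cat_nat _ _ _ m 0 n _ _ (leq0n m) mn) /= lerDl.
by apply: sumr_ge0 => i _; exact: stake_ge0.
Qed.

Lemma stake_tail n : (\sum_(n <= i <oo) (c i)%:E = (1 - \sum_(i < n) c i)%:E)%E.
Proof.
case: (hc) => _ _ sum1.
have := @nneseries_split R (fun i => (c i)%:E) 0 n (fun k _ => stake_ge0 k).
rewrite sum1 add0n sumEFin big_mkord.
have : (0 <= \sum_(n <= i <oo) (c i)%:E)%E by apply: nneseries_ge0 => i _ _; exact: stake_ge0.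
case: (\sum_(n <= i <oo) (c i)%:E)%E => [r| |] //= _.
by rewrite -EFinD => /(congr1 fine) /= ->; congr (_%:E); ring.
Qed.

Lemma stake_partial_le1 n : \sum_(i < n) c i <= 1.
Proof.
rewrite -subr_ge0 -lee_fin -stake_tail.
by apply: nneseries_ge0 => i _ _; exact: stake_ge0.
Qed.

Lemma stake_partial_near1 e : 0 < e -> exists N, 1 - e < \sum_(i < N) c i.
Proof.
move=> e0; case: (hc) => _ _ sum1.
have c0 n : (0 <= n)%N -> xpredT n -> (0 <= (c n)%:E)%E by rewrite lee_fin stake_ge0.
have := cvg_lim _ (ereal_nondecreasing_cvgn (ereal_nondecreasing_series c0)).
rewrite sum1 => /(_ _)/wrap[//|sup1].
have : ((1 - e)%:E < ereal_sup (range (fun n => \sum_(0 <= i < n) (c i)%:E)))%E.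
  by rewrite -sup1 lte_fin; lra.
by case/ereal_sup_gt => _ [N _ <-]; rewrite sumEFin big_mkord lte_fin; exists N.
Qed.

Lemma stake_finite_of_zero N : c N = 0 -> finite_stake_seq c.
Proof.
move=> cN0; split=> //; exists N => i Ni.
by apply/eqP; rewrite eq_le stake_ge0 andbT -cN0 stake_le.
Qed.

End StakeSequence.

Lemma nneseries_fin (R : realType) (u : nat -> R) n :
  (forall i, 0 <= u i) -> (forall i, (n <= i)%N -> u i = 0) ->
  (\sum_(i <oo) (u i)%:E = (\sum_(i < n) u i)%:E)%E.
Proof.
move=> u0 u_eq0.
rewrite (@nneseries_split R (fun i => (u i)%:E) 0 n) ?add0n => [|k _]; last by rewrite lee_fin.
by rewrite sumEFin big_mkord eseries0 ?adde0 // => i ni _; rewrite u_eq0.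
Qed.

Definition S_prefix (R : ringType) (c : nat -> R) n (s : seq bool) :=
  \sum_(i < n) c i * (nth false s i)%:R.

Lemma S_prefix_nseq (R : ringType) (c : nat -> R) n b :
  S_prefix c n (nseq n b) = if b then \sum_(i < n) c i else 0.
Proof.
rewrite /S_prefix; case: b.
  by apply: eq_bigr => i _; rewrite nth_nseq ltn_ord mulr1.
by rewrite big1 // => i _; rewrite nth_nseq ltn_ord mulr0.
Qed.

Definition trunc_stake (R : fieldType) (c : nat -> R) n i :=
  if (i < n)%N then c i / \sum_(j < n) c j else 0.

Definition gap_event (R : realDomainType) (t : R) (c : nat -> R) n (s : seq bool) :=
  (t - (1 - \sum_(i < n) c i) <= S_prefix c n s) && (S_prefix c n s < t * \sum_(i < n) c i).

Section Truncation.
Variables (R : realType) (c : nat -> R).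
Hypothesis hc : stake_seq c.

Lemma trunc_stake_ge0 n i : 0 <= trunc_stake c n i.
Proof.
rewrite /trunc_stake; case: ifP => // _; rewrite divr_ge0 ?(stake_ge0 hc) //.
by apply: sumr_ge0 => j _; exact: stake_ge0.
Qed.

Lemma trunc_stake_finite n : 0 < \sum_(i < n) c i -> finite_stake_seq (trunc_stake c n).
Proof.
move=> C0; have c'0 := trunc_stake_ge0 n.
have c'_eq0 i : (n <= i)%N -> trunc_stake c n i = 0 by rewrite /trunc_stake ltnNge => ->.
split; last by exists n.
split=> // [i|].
  rewrite /trunc_stake; case: ltnP => [i1n|_]; last exact: c'0.
  by rewrite (ltn_trans (ltnSn i) i1n) ler_pM2r ?invr_gt0 ?(stake_le hc).
rewrite (nneseries_fin c'0 c'_eq0) /trunc_stake.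
rewrite (eq_bigr (fun i : 'I_n => c i / \sum_(j < n) c j)) => [|i _]; last by rewrite ltn_ord.
by rewrite -mulr_suml divff // gt_eqF.
Qed.

Lemma gap_event_antichain t n k : 0 <= t -> (k <= n)%N -> 1 - \sum_(i < n) c i < c k ->
  prefix_antichain k (gap_event t c n).
Proof.
move=> t0 kn Ck s s' le_ss' /andP[gap_lo _] /andP[_ gap_hi] i ik.
case: (boolP (nth false s i)) => si; first by move: (le_ss' i); rewrite si => /= ->.
case: (boolP (nth false s' i)) => s'i //; exfalso.
have i_n : (i < n)%N := leq_trans ik kn.
have jump : c i <= S_prefix c n s' - S_prefix c n s.
  rewrite /S_prefix -sumrB (bigD1 (Ordinal i_n)) //= (negbTE si) s'i mulr0 mulr1 subr0 lerDl.
  apply: sumr_ge0 => l _; rewrite -mulrBr mulr_ge0 ?(stake_ge0 hc) //.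
  by move: (le_ss' l); case: (nth false s l); case: (nth false s' l); rewrite ?subrr ?subr0.
have := stake_le hc (ltnW ik); have := stake_partial_le1 hc n.
set C := \sum_(i < n) c i in Ck gap_lo gap_hi * => C1.
have : 0 <= t * (1 - C) by rewrite mulr_ge0 // subr_ge0.
lra.
Qed.

Lemma Pbern_gap_small (p t e : R) : (forall i, 0 < c i) -> 0 <= p -> p <= t -> t <= 1 -> 0 < e ->
  exists2 n, (0 < n)%N & Pbern p n (gap_event t c n) <= e.
Proof.
move=> c_gt0 p0 pt t1 e0; have t0 : 0 <= t := le_trans p0 pt.
(* For p = 0 or 1 the bits are deterministic and no antichain bound is available. *)
have [p_eq0|p_neq0] := eqVneq p 0.
  have [t_eq0|t_neq0] := eqVneq t 0.
    exists 1%N => //; rewrite /Pbern p_eq0 Ebern0 /gap_event S_prefix_nseq.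
    by rewrite t_eq0 mul0r ltxx andbF ltW.
  have t_gt0 : 0 < t by rewrite lt_def t_neq0.
  have [N CN] := stake_partial_near1 hc t_gt0.
  exists N.+1 => //; rewrite /Pbern p_eq0 Ebern0 /gap_event S_prefix_nseq.
  have := stake_partial_mono hc (leqnSn N).
  set C := \sum_(i < N.+1) c i => CNC.
  have -> : (t - (1 - C) <= 0) = false by apply/negbTE; rewrite -ltNge; lra.
  exact: ltW.
have [p_eq1|p_neq1] := eqVneq p 1.
  have t_eq1 : t = 1 by apply/eqP; rewrite eq_le t1 -p_eq1 pt.
  exists 1%N => //; rewrite /Pbern p_eq1 Ebern1 /gap_event S_prefix_nseq.
  by rewrite t_eq1 mul1r ltxx andbF ltW.
have p01 : 0 < p < 1 by rewrite !lt_def p_neq0 eq_sym p_neq1 p0 (le_trans pt t1).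
have [k hk] := Pbern_antichain_small p01 e0.
have [N CN] := stake_partial_near1 hc (c_gt0 k).
exists (maxn N k.+1); first by rewrite leq_max orbT.
apply: hk; first by rewrite leq_max leqnSn orbT.
apply: gap_event_antichain => //; first by rewrite leq_max leqnSn orbT.
by have := stake_partial_mono hc (leq_maxl N k.+1); lra.
Qed.

End Truncation.

Section BernoulliBits.
Context d (T : measurableType d) (R : realType) (P : probability T R) (p : R)
  (beta : nat -> T -> R).
Hypothesis hb : iid_bernoulli P p beta.

Definition bits m n x := [seq beta i x == 1 | i <- iota m n].

Definition bit_set (b : bool) : set R := if b then [set 1] else ~` [set 1].

Definition with_bit (B : nat -> set R) m b i := if i == m then bit_set b else B i.

Definition cylinder (s : seq nat) (B : nat -> set R) :=
  \bigcap_(i in [set i | i \in s]) (beta i @^-1` B i).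

Lemma nth_bits n x i : (i < n)%N -> nth false (bits 0 n x) i = (beta i x == 1).
Proof. by move=> i_n; rewrite (nth_map 0) ?size_iota // nth_iota. Qed.

Lemma preimage_bit_set m b : beta m @^-1` bit_set b = [set x | (beta m x == 1) = b].
Proof. by apply/seteqP; split => x; case: b; rewrite /bit_set /=; case: eqP. Qed.

Lemma bits_split m n (A : pred (seq bool)) : [set x | A (bits m n.+1 x)] =
  (beta m @^-1` bit_set true `&` [set x | A (true :: bits m.+1 n x)]) `|`
  (beta m @^-1` bit_set false `&` [set x | A (false :: bits m.+1 n x)]).
Proof.
rewrite !preimage_bit_set; apply/seteqP; split => x /=; rewrite /bits /=.
  by case: (beta m x == 1) => Ax; [left | right].
by case: (beta m x == 1) => -[[e Ax]|[e Ax]].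
Qed.

Lemma measurable_bit_set b : measurable (bit_set b).
Proof. by case: b; rewrite /bit_set; [|apply: measurableC]; exact: measurable_set1. Qed.

Lemma measurable_with_bit B m b :
  (forall i, measurable (B i)) -> forall i, measurable (with_bit B m b i).
Proof.
by move=> mB i; rewrite /with_bit; case: eqP => _; [exact: measurable_bit_set | exact: mB].
Qed.

Lemma measurable_beta_preimage i B : measurable B -> measurable (beta i @^-1` B).
Proof. by case: hb => mbeta _ _ _ mB; rewrite -[_ @^-1` _]setTI; exact: mbeta. Qed.

Lemma measurable_bit_event m b : measurable (beta m @^-1` bit_set b).
Proof. by apply: measurable_beta_preimage; exact: measurable_bit_set. Qed.

Lemma measurable_cylinder s B : (forall i, measurable (B i)) -> measurable (cylinder s B).
Proof. by move=> mB; apply: bigcap_measurableType => i _; exact: measurable_beta_preimage. Qed.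

Lemma measurable_bits m n (A : pred (seq bool)) : measurable [set x | A (bits m n x)].
Proof.
elim: n m A => [|n IH] m A.
  rewrite /bits /=; case: (A [::]).
    by rewrite (_ : [set _ | true] = setT) //; apply/seteqP; split.
  by rewrite (_ : [set _ | false] = set0) //; apply/seteqP; split.
rewrite bits_split; apply: measurableU; apply: measurableI; try exact: measurable_bit_event;
  exact: (IH _ (fun u => A (_ :: u))).
Qed.

Lemma measure_bit_set m b : P (beta m @^-1` bit_set b) = (if b then p else 1 - p)%:E.
Proof.
case: hb => _ _ Pbeta1 _; case: b; rewrite /bit_set ?Pbeta1 //.
rewrite -preimage_setC probability_setC ?Pbeta1 //.
by apply: measurable_beta_preimage; exact: measurable_set1.
Qed.

Lemma measure_cylinder_with_bit s B m b : uniq s -> (forall i, measurable (B i)) -> m \notin s ->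
  P (cylinder (m :: s) (with_bit B m b)) = ((if b then p else 1 - p)%:E * P (cylinder s B))%E.
Proof.
case: hb => _ _ _ indep s_uniq mB m_notin_s.
rewrite /cylinder indep /=; [|by rewrite m_notin_s|exact: measurable_with_bit].
rewrite big_cons {1}/with_bit eqxx measure_bit_set indep //; congr (_ * _)%E.
by apply: eq_big_seq => i i_s; rewrite /with_bit ifN //; apply: contraNneq m_notin_s => <-.
Qed.

Lemma cylinder_with_bit s B m b : m \notin s ->
  cylinder (m :: s) (with_bit B m b) = cylinder s B `&` beta m @^-1` bit_set b.
Proof.
move=> m_notin_s; apply/seteqP; split => x /=.
  move=> Cx; split; last by have := Cx m; rewrite /= inE eqxx /with_bit eqxx; apply.
  move=> i /= i_s; have := Cx i; rewrite /= inE i_s orbT /with_bit ifN //; first by apply.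
  by apply: contraNneq m_notin_s => <-.
move=> [Cx bx] i /=; rewrite inE /with_bit => /predU1P[->|i_s]; first by rewrite eqxx.
by rewrite ifN; [exact: Cx | apply: contraNneq m_notin_s => <-].
Qed.

Lemma measure_cylinder_bits n m (A : pred (seq bool)) s B : uniq s ->
  (forall i, measurable (B i)) -> (forall i, i \in s -> (i < m)%N) ->
  P (cylinder s B `&` [set x | A (bits m n x)]) = ((Pbern p n A)%:E * P (cylinder s B))%E.
Proof.
elim: n m A s B => [|n IH] m A s B s_uniq mB s_lt_m.
  rewrite /Pbern /bits /=; case: (A [::]) => /=.
    by rewrite (_ : [set _ | true] = setT) ?setIT ?mul1e //; apply/seteqP; split.
  by rewrite (_ : [set _ | false] = set0) ?setI0 ?measure0 ?mul0e //; apply/seteqP; split.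
have m_notin_s : m \notin s by apply/negP => /s_lt_m; rewrite ltnn.
have ms_lt i : i \in m :: s -> (i < m.+1)%N.
  by rewrite inE => /predU1P[->//|/s_lt_m/ltnW].
have ms_uniq : uniq (m :: s) by rewrite /= m_notin_s.
have IHb b := IH m.+1 (fun u => A (b :: u)) _ (with_bit B m b) ms_uniq
  (@measurable_with_bit B m b mB) ms_lt.
have mpiece b : measurable (cylinder s B `&`
    (beta m @^-1` bit_set b `&` [set x | A (b :: bits m.+1 n x)])).
  apply: measurableI; first exact: measurable_cylinder.
  apply: measurableI; first exact: measurable_bit_event.
  exact: (measurable_bits _ _ (fun u => A (b :: u))).
rewrite bits_split setIUr measureU; [|exact: mpiece|exact: mpiece|]; last first.
  rewrite !preimage_bit_set; apply/seteqP; split => x // [[_ [/= e1 _]] [_ [/= e2 _]]].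
  by rewrite e1 in e2.
(* measureU states its result for P viewed as a content; refold so that IHb applies. *)
rewrite !setIA -!cylinder_with_bit // -[X in (X + _)%E]/(P _) -[X in (_ + X)%E]/(P _).
rewrite (IHb true) (IHb false) !measure_cylinder_with_bit //.
rewrite -(fineK (fin_num_measure P _ (measurable_cylinder s mB))) -!EFinM -EFinD.
by congr EFin; rewrite /Pbern /=; ring.
Qed.

Lemma measure_bits n (A : pred (seq bool)) : P [set x | A (bits 0 n x)] = (Pbern p n A)%:E.
Proof.
have := @measure_cylinder_bits n 0 A [::] (fun=> setT) erefl (fun=> measurableT) (fun i => id).
rewrite /cylinder /= (_ : \bigcap_(i in _) _ = setT) ?setTI ?probability_setT ?mule1 //.
by apply/seteqP; split => x // _ i.
Qed.

End BernoulliBits.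

Section TruncationProbability.
Context d (T : measurableType d) (R : realType) (P : probability T R) (p : R)
  (beta : nat -> T -> R).
Hypothesis hb : iid_bernoulli P p beta.

Lemma beta_bit i x : beta i x = (beta i x == 1)%:R.
Proof.
by case: hb => _ beta01 _ _; case: (beta01 i x) => ->; rewrite ?eqxx // eq_sym oner_eq0.
Qed.

Lemma beta_ge0 i x : 0 <= beta i x.
Proof. by rewrite beta_bit ler0n. Qed.

Lemma measurable_S_gamma_ge (c : nat -> R) t : (forall i, 0 <= c i) ->
  measurable [set x | (t%:E <= S_gamma c beta x)%E].
Proof.
move=> c0; rewrite -[X in measurable X]setTI; apply: emeasurable_fun_c_infty => //.
apply: ge0_emeasurable_sum => [k x _ _|k _]; first by rewrite lee_fin mulr_ge0 ?beta_ge0.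
apply/measurable_EFinP; apply: measurable_funM; first exact: measurable_cst.
by case: hb.
Qed.

Variable c : nat -> R.
Hypothesis hc : stake_seq c.

Lemma S_prefix_bits n x : S_prefix c n (bits beta 0 n x) = \sum_(i < n) c i * beta i x.
Proof. by apply: eq_bigr => i _; rewrite nth_bits // -beta_bit. Qed.

Lemma S_gamma_le_prefix n x :
  (S_gamma c beta x <= (S_prefix c n (bits beta 0 n x) + (1 - \sum_(i < n) c i))%:E)%E.
Proof.
have cb0 i : (0 <= (c i * beta i x)%:E)%E by rewrite lee_fin mulr_ge0 ?(stake_ge0 hc) ?beta_ge0.
rewrite /S_gamma (@nneseries_split R _ 0 n) ?add0n // EFinD sumEFin big_mkord.
rewrite S_prefix_bits -(stake_tail hc); apply: leeD => //; apply: lee_nneseries => // i _.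
by rewrite lee_fin ler_piMr ?(stake_ge0 hc) // beta_bit; case: (_ == _).
Qed.

Lemma S_gamma_trunc n x :
  S_gamma (trunc_stake c n) beta x = (S_prefix c n (bits beta 0 n x) / \sum_(i < n) c i)%:E.
Proof.
rewrite /S_gamma (@nneseries_fin R _ n) => [|i|i ni]; first last.
- by rewrite /trunc_stake ltnNge ni mul0r.
- by rewrite mulr_ge0 ?beta_ge0 ?(trunc_stake_ge0 hc).
rewrite S_prefix_bits mulr_suml; congr EFin; apply: eq_bigr => i _.
by rewrite /trunc_stake ltn_ord mulrAC.
Qed.

Lemma prob_ge_le_trunc t n : 0 < \sum_(i < n) c i ->
  (prob_ge P beta c t <= prob_ge P beta (trunc_stake c n) t + (Pbern p n (gap_event t c n))%:E)%E.
Proof.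
move=> C0; set C := \sum_(i < n) c i in C0 *.
have split_event : [set x | (t%:E <= S_gamma c beta x)%E] `<=`
    [set x | (t%:E <= S_gamma (trunc_stake c n) beta x)%E] `|`
    [set x | gap_event t c n (bits beta 0 n x)].
  move=> x /= /le_trans/(_ (S_gamma_le_prefix n x)); rewrite S_gamma_trunc !lee_fin.
  rewrite ler_pdivlMr // /gap_event -/C => gap_lo.
  case: (leP (t * C) (S_prefix c n (bits beta 0 n x))) => V_lt; first by left.
  by right; apply/andP; split; lra.
rewrite /prob_ge -(measure_bits hb).
have m_c := measurable_S_gamma_ge t (stake_ge0 hc).
have m_trunc := measurable_S_gamma_ge t (trunc_stake_ge0 hc n).
have m_gap := measurable_bits hb 0 n (gap_event t c n).
apply: le_trans (le_measure _ _ _ split_event) (measureU2 _ m_trunc m_gap); rewrite inE //.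
exact: measurableU.
Qed.

End TruncationProbability.

Theorem proposition6 (d : measure_display) (T : measurableType d) (R : realType)
  (P : probability T R) (p t : R) (beta : nat -> T -> R) :
  iid_bernoulli P p beta ->
  0 <= p -> p <= t -> t <= 1 ->
  pi_sup P beta t = pi_fin_sup P beta t.
Proof.
move=> hb p0 pt t1; apply/eqP; rewrite eq_le; apply/andP; split; last first.
  by apply: ereal_sup_le => _ [c [hc _] <-]; exists c.
apply: ge_ereal_sup => _ [c hc <-].
have [[N cN0]|c_neq0] := pselect (exists N, c N = 0).
  by apply: ereal_sup_ubound; exists c => //; exact: stake_finite_of_zero cN0.
have c_gt0 i : 0 < c i.
  by rewrite lt_def stake_ge0 // andbT; apply/eqP => ci0; apply: c_neq0; exists i.
apply/lee_addgt0Pr => e e0.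
have [n n_gt0 gap_le_e] := Pbern_gap_small hc c_gt0 p0 pt t1 e0.
have C0 : 0 < \sum_(i < n) c i.
  by apply: lt_le_trans (stake_partial_mono hc n_gt0); rewrite big_ord1 c_gt0.
apply: le_trans (prob_ge_le_trunc hb hc t C0) _; apply: leeD; last by rewrite lee_fin.
by apply: ereal_sup_ubound; exists (trunc_stake c n) => //; exact: trunc_stake_finite.
Qed.
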